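(* In every execution of the Minimmit protocol (described in the context), if a block $b$ receives an L-notarization and $v=b.\text{view}$, then view $v$ does not receive a nullification.
   Context: Setting. There are $n$ processors $\Pi=\{p_0,\dots,p_{n-1}\}$ and an integer $f$ with $5f+1\le n$. At most $f$ processors may be corrupted by an adversary during the execution and then behave arbitrarily (Byzantine); processors never corrupted are called correct. Processors communicate over point-to-point authenticated channels; every message is signed by its sender; a PKI validates signatures and $H$ is a collision-resistant hash function; attention is restricted to executions in which the adversary cannot forge signatures or find hash collisions. Time is divided into timeslots $t\in\mathbb{N}_{\ge 0}$ (partial synchrony): a message sent at time $t$ arrives at some time $t'>t$ with $t'\le \max\{\text{GST},t\}+\Delta$, where $\Delta$ is known to the protocol and GST is unknown and chosen by the adversary (who also chooses delivery times subject to this constraint). Clocks of correct processors advance in real time. When a correct processor sends a message to all processors, it regards that message as immediately received by itself. Transactions are unique messages signed by the environment; each timeslot each processor may receive a finite set of transactions. Each processor $p_i$ maintains an append-only log $\text{log}_i$ of distinct transactions, $\text{log}_i(t)$ denoting its value at the end of timeslot $t$. Blocks. $\text{lead}(v):=p_j$ with $j=v \bmod n$. The genesis block is $b_{\text{gen}}=(0,\lambda,\lambda)$ ($\lambda$ the empty sequence). Any other block is a tuple $b=(v,\text{Tr},h)$ signed by $\text{lead}(v)$, with $v\in\mathbb{N}_{\ge1}$ ($b.\text{view}=v$, ''a view $v$ block''), $\text{Tr}=b.\text{Tr}$ a sequence of distinct transactions, and $h=b.h$ a hash value; its parent is the block $b'$ with $H(b')=h$. The ancestors of $b$ are $b$ and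 the ancestors of its parent ($b_{\text{gen}}$ has only itself). Two blocks are inconsistent if neither is an ancestor of the other. To finalise $b$ means: upon obtaining all ancestors of $b$, the processor sets its log to extend the concatenation of $b'.\text{Tr}$ over ancestors $b'$ of $b$ (with duplicates removed). Messages. A vote for $b$ is $(\text{vote},b)$. An M-notarization for $b$ is a set of $2f+1$ votes for $b$ signed by distinct processors; an L-notarization for $b$ is a set of $n-f$ votes for $b$ signed by distinct processors. A nullify$(v)$ message is $(\text{nullify},v)$; a nullification for view $v$ is a set of $2f+1$ nullify$(v)$ messages signed by distinct processors. In the claim, a block $b$ ''receives an M-notarization'' if $b=b_{\text{gen}}$ or at least $2f+1$ processors send votes for $b$; $b$ ''receives an L-notarization'' if $b=b_{\text{gen}}$ or at least $n-f$ processors send votes for $b$; view $v$ ''receives a nullification'' if at least $2f+1$ processors send nullify$(v)$ messages. Local state of each processor: $\mathtt{S}$, the set of all received messages (automatically updated; it contains a block $b$ if it contains any message having $b$ as an entry; initially it contains only $b_{\text{gen}}$ and an M- and L-notarization for $b_{\text{gen}}$); the current view $\mathtt{v}$ (initially 1; a processor enters view $v$ when $\mathtt{v}$ becomes $v$); a timer $\mathtt{T}$ (initially 0, increasing in real time, reset to 0 upon entering a new view); $\mathtt{nullified}$ (initially false) and $\mathtt{notarized}$ (initially $\bot$, a value different from every block). SelectParent$(\mathtt{S},\mathtt{v})$: let $v'<\mathtt{v}$ be greatest such that $\mathtt{S}$ contains an M-notarization for some block of view $v'$; output the lexicographically least such block. ProposeChild$(b,v)$: form a sequence Tr of distinct transactions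 containing all transactions received and not in $b'.\text{Tr}$ for any ancestor $b'\in\mathtt{S}$ of $b$, and send the block $(v,\text{Tr},H(b))$ to all processors. $\mathtt{S}$ contains a valid proposal $b$ for view $v$ if $\mathtt{S}$ contains (i) precisely one block of the form $b=(v,\text{Tr},h)$ signed by $\text{lead}(v)$, (ii) an M-notarization for some $b'$ with $H(b')=h$, say $b'.\text{view}=v'$, and (iii) a nullification for each view in the open interval $(v',v)$. At timeslot $t$ a nullification $N\subseteq\mathtt{S}$ for a view $v$ is new if $\mathtt{S}$ contained no nullification for $v$ at any earlier timeslot and $N$ is lexicographically least among nullifications for $v$ in $\mathtt{S}$; new M-notarizations and new L-notarizations for a block $b$ are defined analogously. Protocol (Minimmit): at every timeslot, correct $p_i$ does, in order: (1) send new nullifications in $\mathtt{S}$ to all processors; (2) send new M- and L-notarizations in $\mathtt{S}$ to all; (3) if $p_i=\text{lead}(\mathtt{v})$, execute ProposeChild(SelectParent$(\mathtt{S},\mathtt{v}),\mathtt{v})$; (4) if $\mathtt{S}$ contains a valid proposal $b$ for view $\mathtt{v}$ and $\mathtt{notarized}=\bot$ and $\mathtt{nullified}=$ false, set $\mathtt{notarized}:=b$ and send $(\text{vote},b)$ to all; (5) if $\mathtt{T}=2\Delta$, $\mathtt{nullified}=$ false and $\mathtt{notarized}=\bot$, set $\mathtt{nullified}:=$ true and send $(\text{nullify},\mathtt{v})$ to all; (6) if $\mathtt{S}$ contains a nullification for $\mathtt{v}$, set $\mathtt{v}:=\mathtt{v}+1$, $\mathtt{nullified}:=$ false, $\mathtt{notarized}:=\bot$;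 (7) if $\mathtt{S}$ contains an M-notarization for some $b$ with $b.\text{view}=\mathtt{v}$: if $\mathtt{notarized}=\bot$ and $\mathtt{nullified}=$ false send $(\text{vote},b)$ to all; then set $\mathtt{v}:=\mathtt{v}+1$, $\mathtt{nullified}:=$ false, $\mathtt{notarized}:=\bot$; (8) if $\mathtt{nullified}=$ false, $\mathtt{notarized}\neq\bot$, and $\mathtt{S}$ contains at least $2f+1$ messages signed by distinct processors, each either $(\text{nullify},\mathtt{v})$ or $(\text{vote},b)$ for some $b$ with $b.\text{view}=\mathtt{v}$ and $b\ne\mathtt{notarized}$, then set $\mathtt{nullified}:=$ true and send $(\text{nullify},\mathtt{v})$ to all; (9) if $\mathtt{S}$ contains a new L-notarization for a block $b$, finalise $b$. *)

From mathcomp Require Import all_boot.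
Set Implicit Arguments.
Unset Strict Implicit.
Unset Printing Implicit Defensive.

Section Minimmit.

Variables (n f Delta : nat).
Variable Tx : countType.
(* The collision-resistant hash function, restricted (see the theorem) to be
   injective, i.e. executions in which no collision is found. *)

Definition Proc := 'I_n.

(* A block (v, Tr, h).  Hash values are [Some k]; [None] is the empty
   sequence lambda used in the genesis block. *)
Definition block := (nat * seq Tx * option nat)%type.
Definition bview (b : block) : nat := b.1.1.
Definition btr (b : block) : seq Tx := b.1.2.
Definition bh (b : block) : option nat := b.2.
Definition bgen : block := (0, [::], None).

(* Signed entries of messages:
   - a block (signed by lead(view)),
   - a vote (vote, b) signed by a processor,
   - a nullify(v) message signed by a processor. *)
Definition atom := (block + (Proc * block) + (Proc * nat))%type.
Definition ABlock (b : block) : atom := inl (inl b).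
Definition AVote (p : Proc) (b : block) : atom := inl (inr (p, b)).
Definition ANull (p : Proc) (v : nat) : atom := inr (p, v).

(* A message is a finite collection of entries (a block, a vote, a nullify
   message, an M-/L-notarization = a set of votes, a nullification = a set
   of nullify messages). *)
Definition msg := seq atom.

Definition atom_block (a : atom) : option block :=
  match a with
  | inl (inl b) => Some b
  | inl (inr (_, b)) => Some b
  | inr _ => None
  end.

(* processor whose signature the entry carries (blocks: see lead) *)
Definition atom_signer (a : atom) : option Proc :=
  match a with
  | inl (inl _) => None
  | inl (inr (p, _)) => Some p
  | inr (p, _) => Some p
  end.

Definition atom_nullview (a : atom) : option nat :=
  match a with inr (_, v) => Some v | _ => None end.

Definition blocks (S : seq atom) : seq block := undup (pmap atom_block S).

Definition voters (S : seq atom) (b : block) : seq Proc :=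
  [seq p <- enum 'I_n | AVote p b \in S].
Definition nullers (S : seq atom) (v : nat) : seq Proc :=
  [seq p <- enum 'I_n | ANull p v \in S].

Definition mnotb (S : seq atom) (b : block) : bool :=
  (b == bgen) || (2 * f + 1 <= size (voters S b)).
Definition lnotb (S : seq atom) (b : block) : bool :=
  (b == bgen) || (n - f <= size (voters S b)).
Definition nullb (S : seq atom) (v : nat) : bool :=
  2 * f + 1 <= size (nullers S v).

(* Lexicographic order, w.r.t. a fixed encoding of entries. *)
Definition codeleq {T : countType} (x y : T) : bool := pickle x <= pickle y.

Definition lexleast (k : nat) (xs : seq atom) : msg :=
  take k (sort codeleq (undup xs)).

Definition nullviews (S : seq atom) : seq nat := undup (pmap atom_nullview S).

(* new nullifications / M-notarizations / L-notarizations at a timeslot,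
   given S at the end of the previous timeslot ([Sprev]) and now ([S]). *)
Definition new_nullifications (Sprev S : seq atom) : seq msg :=
  [seq lexleast (2 * f + 1) [seq ANull p v | p <- nullers S v]
  | v <- nullviews S & nullb S v && ~~ nullb Sprev v].

Definition new_notarizations (Sprev S : seq atom) : seq msg :=
  [seq lexleast (2 * f + 1) [seq AVote p b | p <- voters S b]
  | b <- blocks S & (b != bgen) && mnotb S b && ~~ mnotb Sprev b] ++
  [seq lexleast (n - f) [seq AVote p b | p <- voters S b]
  | b <- blocks S & (b != bgen) && lnotb S b && ~~ lnotb Sprev b].

Definition is_lead (p : Proc) (v : nat) : bool := val p == v %% n.

Section Hash.
Variable H : block -> nat.
Definition hsh (b : block) : option nat := Some (H b).

Inductive is_anc : block -> block -> Prop :=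
| anc_refl b : is_anc b b
| anc_step b p a : bh b = hsh p -> is_anc p a -> is_anc b a.

Definition select_parent (S : seq atom) (v : nat) : block :=
  let cand := [seq b <- bgen :: blocks S | mnotb S b && (bview b < v)] in
  let v' := \max_(b <- cand) bview b in
  head bgen (sort codeleq [seq b <- cand | bview b == v']).

Definition valid_proposal (S : seq atom) (v : nat) : option block :=
  match [seq b <- blocks S | bview b == v] with
  | [:: b] =>
      if has (fun b' => (hsh b' == bh b) && mnotb S b' &&
                 all (nullb S) (iota (bview b').+1 (v - (bview b').+1)))
             (bgen :: blocks S)
      then Some b else None
  | _ => None
  end.

(* Local state of a correct processor (the log is not modelled). *)
Record lstate := LState {
  lS : seq atom;            (* S (as the set of received entries) *)
  lv : nat;
  lent : nat;               (* timeslot at which view v was entered: T = t - lent *)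
  lnullified : bool;
  lnotarized : option block }.

Definition init_state : lstate := LState [:: ABlock bgen] 1 0 false None.

Record wstate := W {
  wS : seq atom; wv : nat; went : nat; wnul : bool; wnt : option block;
  wout : seq msg }.

(* send a message to all; it is regarded as immediately received *)
Definition wsend (w : wstate) (m : msg) : wstate :=
  W (wS w ++ m) (wv w) (went w) (wnul w) (wnt w) (rcons (wout w) m).

Definition step12 (Sprev : seq atom) (w : wstate) : wstate :=
  foldl wsend w (new_nullifications Sprev (wS w) ++ new_notarizations Sprev (wS w)).

(* step (3), with Tr the sequence of transactions chosen by ProposeChild *)
Definition step3 (i : Proc) (Tr : seq Tx) (w : wstate) : wstate :=
  if is_lead i (wv w)
  then wsend w [:: ABlock (wv w, Tr, hsh (select_parent (wS w) (wv w)))]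
  else w.

Definition step4 (i : Proc) (w : wstate) : wstate :=
  match valid_proposal (wS w) (wv w) with
  | Some b =>
      if ~~ isSome (wnt w) && ~~ wnul w
      then wsend (W (wS w) (wv w) (went w) (wnul w) (Some b) (wout w)) [:: AVote i b]
      else w
  | None => w
  end.

Definition step5 (i : Proc) (t : nat) (w : wstate) : wstate :=
  if (t - went w == 2 * Delta) && ~~ wnul w && ~~ isSome (wnt w)
  then wsend (W (wS w) (wv w) (went w) true (wnt w) (wout w)) [:: ANull i (wv w)]
  else w.

Definition step6 (t : nat) (w : wstate) : wstate :=
  if nullb (wS w) (wv w)
  then W (wS w) (wv w).+1 t false None (wout w)
  else w.

(* step (7); [b7] resolves the choice of "some b" when several blocks qualify *)
Definition step7 (i : Proc) (t : nat) (b7 : block) (w : wstate) : wstate :=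
  let c := [seq b <- blocks (wS w) | mnotb (wS w) b && (bview b == wv w)] in
  if c is b0 :: _ then
    let b := if b7 \in c then b7 else b0 in
    let w' := if ~~ isSome (wnt w) && ~~ wnul w then wsend w [:: AVote i b] else w in
    W (wS w') (wv w).+1 t false None (wout w')
  else w.

Definition other_vote (p : Proc) (v : nat) (bn : block) (a : atom) : bool :=
  match a with
  | inl (inr (q, b)) => (q == p) && (bview b == v) && (b != bn)
  | _ => false
  end.

Definition step8 (i : Proc) (w : wstate) : wstate :=
  if wnt w is Some bn then
    if ~~ wnul w &&
       (2 * f + 1 <= size [seq p <- enum 'I_n |
                           (ANull p (wv w) \in wS w) || has (other_vote p (wv w) bn) (wS w)])
    then wsend (W (wS w) (wv w) (went w) true (wnt w) (wout w)) [:: ANull i (wv w)]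
    else w
  else w.

Definition protocol_step (i : Proc) (t : nat) (Tr : seq Tx) (b7 : block)
    (st : lstate) (R : seq atom) : lstate * seq msg :=
  let w0 := W (lS st ++ R) (lv st) (lent st) (lnullified st) (lnotarized st) [::] in
  let w := step8 i (step7 i t b7 (step6 t (step5 i t (step4 i
             (step3 i Tr (step12 (lS st) w0)))))) in
  (LState (wS w) (wv w) (went w) (wnul w) (wnt w), wout w).

(* An execution: corrupted processors, all messages sent (sender, timeslot,
   recipient), delivery times, transactions received, the nondeterministic
   choices of correct processors, GST, and the local states of correct
   processors at the end of each timeslot. *)
Record execution := Exec {
  byz : {set Proc};
  sent : Proc -> nat -> Proc -> seq msg;
  arr : Proc -> nat -> Proc -> msg -> nat;
  txin : Proc -> nat -> seq Tx;
  trch : Proc -> nat -> seq Tx;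
  b7ch : Proc -> nat -> block;
  gst : nat;
  lst : Proc -> nat -> lstate }.

Definition prev_state (E : execution) (i : Proc) (t : nat) : lstate :=
  if t is t'.+1 then lst E i t' else init_state.

Definition recv (E : execution) (j : Proc) (t : nat) : seq atom :=
  flatten (flatten [seq [seq m <- sent E i t' j | arr E i t' j m == t]
                   | i <- enum 'I_n, t' <- iota 0 t]).

Definition txs_upto (E : execution) (i : Proc) (t : nat) : seq Tx :=
  flatten [seq txin E i t' | t' <- iota 0 t.+1].

Definition is_execution (E : execution) : Prop :=
  [/\
      #|byz E| <= f,
      (forall i t j m, m \in sent E i t j ->
        t < arr E i t j m <= maxn (gst E) t + Delta),
      (forall i t j m a b, m \in sent E i t j -> a \in m -> atom_block a = Some b ->
        b = bgen \/ (1 <= bview b /\ uniq (btr b))),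
      (* no forgery of signatures of correct processors on votes/nullify *)
      (forall q t j m a p, m \in sent E q t j -> a \in m -> atom_signer a = Some p ->
        p \notin byz E ->
        exists t' j' m', [/\ t' <= t, m' \in sent E p t' j' & a \in m'])
      &
      (* no forgery of blocks of correct leaders *)
      (forall q t j m a b l, m \in sent E q t j -> a \in m -> atom_block a = Some b ->
        b <> bgen -> is_lead l (bview b) -> l \notin byz E ->
        exists t' j' m' a', [/\ t' <= t, m' \in sent E l t' j', a' \in m' &
                               atom_block a' = Some b])]
  /\
      (forall i t, i \notin byz E ->
        let S0 := lS (prev_state E i t) ++ recv E i t in
        [/\ (is_lead i (lv (prev_state E i t)) ->
              uniq (trch E i t) /\
              forall x, x \in txs_upto E i t ->
                (forall a, a \in blocks S0 ->
                   is_anc (select_parent S0 (lv (prev_state E i t))) a ->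
                   x \notin btr a) ->
                x \in trch E i t),
            lst E i t = (protocol_step i t (trch E i t) (b7ch E i t)
                                       (prev_state E i t) (recv E i t)).1 &
            forall j, sent E i t j = (protocol_step i t (trch E i t) (b7ch E i t)
                                       (prev_state E i t) (recv E i t)).2]).

End Hash.

(* processor p sends a vote for b / a nullify(v) message: a message carrying
   that signed entry is sent by someone at some time *)
Definition sends_vote (E : execution) (p : Proc) (b : block) : Prop :=
  exists q t j m, m \in sent E q t j /\ AVote p b \in m.
Definition sends_nullify (E : execution) (p : Proc) (v : nat) : Prop :=
  exists q t j m, m \in sent E q t j /\ ANull p v \in m.

Definition receives_L_notarization (E : execution) (b : block) : Prop :=
  b = bgen \/
  exists P : {set Proc}, n - f <= #|P| /\ forall p, p \in P -> sends_vote E p b.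

Definition receives_nullification (E : execution) (v : nat) : Prop :=
  exists P : {set Proc}, 2 * f + 1 <= #|P| /\ forall p, p \in P -> sends_nullify E p v.

End Minimmit.

From mathcomp Require Import all_boot zify.
Set Implicit Arguments. Unset Strict Implicit. Unset Printing Implicit Defensive.

(* Let v = bview b and let P be the n - f processors voting for b.  A correct
   processor votes at most once per view, and after voting in view v it can
   only send nullify(v) through step (8), i.e. after collecting 2f + 1
   processors each of which either sent nullify(v) earlier or voted for
   another block of view v.  By induction on the time of sending, no correct
   member of P ever sends nullify(v): a correct member of P among the 2f + 1
   witnesses of the first such message would have voted twice in view v or
   nullified v even earlier, so all witnesses are Byzantine or outside P, and
   there are at most f + f of those.  For the same reason the 2f + 1 senders of
   a nullification for v cannot exist.  For the genesis block v = 0, and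
   correct processors only nullify views >= 1. *)

Lemma quorum_intersection (T : finType) (B P Q : {set T}) :
  #|B| + #|~: P| < #|Q| -> exists q, [/\ q \in Q, q \notin B & q \in P].
Proof.
move=> ltQ; have [/eqP|[q]] := set_0Vmem (Q :\: (B :|: ~: P)).
  rewrite setD_eq0 => /subset_leq_card leQ.
  by have := leq_trans leQ (leq_card_setU B (~: P)).1; rewrite leqNgt ltQ.
by rewrite !inE negb_or negbK => /andP[/andP[qB qP] qQ]; exists q.
Qed.

Lemma card_filter_enum n (P : pred 'I_n) :
  size [seq p <- enum 'I_n | P p] = #|[set p | P p]|.
Proof.
rewrite cardsE cardE /enum_mem -filter_predI; congr size.
by apply: eq_filter => x; rewrite /= andbT.
Qed.

Lemma AVote_inj n (Tx : countType) (p q : Proc n) (x y : block Tx) :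
  AVote p x = AVote q y -> p = q /\ x = y.
Proof. by case=> -> ->. Qed.

Lemma ANull_inj n (Tx : countType) (p q : Proc n) u v :
  ANull Tx p u = ANull Tx q v -> p = q /\ u = v.
Proof. by case=> -> ->. Qed.

Lemma mem_lexleast n (Tx : countType) k (xs : seq (atom n Tx)) a :
  a \in lexleast k xs -> a \in xs.
Proof. by move/mem_take; rewrite mem_sort mem_undup. Qed.

Lemma mem_new_messages n (Tx : countType) f (Sprev S : seq (atom n Tx)) m a :
  m \in new_nullifications f Sprev S ++ new_notarizations f Sprev S -> a \in m -> a \in S.
Proof.
rewrite /new_notarizations /new_nullifications !mem_cat.
by case/or3P=> /mapP[z _ ->] /mem_lexleast /mapP[p];
  rewrite /nullers /voters mem_filter => /andP[? _] ->.
Qed.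

Lemma valid_proposal_view f (Tx : countType) n (H : block Tx -> nat) (S : seq (atom n Tx)) v x :
  valid_proposal f H S v = Some x -> bview x = v.
Proof.
rewrite /valid_proposal; case E: [seq _ <- _ | _] => [|b [|]] //; case: ifP => // _ [<-].
have : b \in [seq b0 <- blocks S | bview b0 == v] by rewrite E mem_head.
by rewrite mem_filter => /andP[/eqP].
Qed.

Lemma foldl_wsend_wv n (Tx : countType) (ms : seq (msg n Tx)) w :
  wv (foldl (@wsend n Tx) w ms) = wv w.
Proof. by elim: ms w => [|m ms IH] w //=; rewrite IH. Qed.

Section Timeslot.

Variables (n f Delta : nat) (Tx : countType) (H : block Tx -> nat).
Variables (i : Proc n) (st : lstate n Tx) (R : seq (atom n Tx)).
Hypothesis notarized_view : forall x, lnotarized st = Some x -> bview x = lv st.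

Notation atomT := (atom n Tx).
Notation msgs := (seq (msg n Tx)).

Definition slot_input : seq atomT := lS st ++ R.

(* Sent in this timeslot but not received: the processor signed it itself
   rather than relaying it. *)
Definition created (a : atomT) (out : msgs) := a \in flatten out /\ a \notin slot_input.

(* Justifications of a nullify(u) created in step (5), resp. step (8). *)
Definition timeout_nullify (out : msgs) u :=
  [/\ u = lv st, lnotarized st = None & forall x, created (AVote i x) out -> bview x <> u].

Definition quorum_nullify (S : seq atomT) (out : msgs) u :=
  exists bn, [/\ lnotarized st = Some bn \/ AVote i bn \in flatten out, bview bn = u &
    exists Q : {set Proc n}, 2 * f + 1 <= #|Q| /\ forall q, q \in Q ->
      ANull Tx q u \in slot_input \/ exists y, [/\ AVote q y \in S, bview y = u & y <> bn]].

Record slot_inv (w : wstate n Tx) : Prop := {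
  slot_S : wS w = slot_input ++ flatten (wout w);
  slot_view_ge : lv st <= wv w;
  slot_flags_kept : wv w = lv st ->
    (lnullified st -> wnul w) /\ (forall x, lnotarized st = Some x -> wnt w = Some x);
  slot_notarized : forall x, wnt w = Some x ->
    bview x = wv w /\ (lnotarized st = Some x \/ AVote i x \in flatten (wout w));
  slot_vote : forall x, created (AVote i x) (wout w) -> [/\ lv st <= bview x,
    bview x < wv w \/ (bview x = wv w /\ wnt w = Some x) &
    bview x = lv st -> lnotarized st = None /\ lnullified st = false];
  slot_vote_unique : forall x y, created (AVote i x) (wout w) ->
    created (AVote i y) (wout w) -> bview x = bview y -> x = y;
  slot_nullify : forall u, created (ANull Tx i u) (wout w) -> [/\ lv st <= u <= wv w,
    u = wv w -> wnul w & timeout_nullify (wout w) u \/ quorum_nullify (wS w) (wout w) u];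
  slot_created : forall a, created a (wout w) ->
    [\/ exists x, a = AVote i x, exists u, a = ANull Tx i u | exists b, a = ABlock n b]
}.

Lemma created_rcons a out m :
  created a (rcons out m) <-> created a out \/ (a \in m /\ a \notin slot_input).
Proof.
rewrite /created flatten_rcons mem_cat; split; first by case=> /orP[]; auto.
by case=> [[-> ->]|[-> ->]]; rewrite ?orbT.
Qed.

Lemma created_rcons1 a b out :
  created b (rcons out [:: a]) -> created b out \/ (b = a /\ a \notin slot_input).
Proof. by case/created_rcons=> [|[]]; [left | rewrite inE => /eqP -> ?; right]. Qed.

Lemma timeout_nullify_rcons out a u : timeout_nullify out u ->
  (forall x, a = AVote i x -> bview x <> u) -> timeout_nullify (rcons out [:: a]) u.
Proof. by move=> [? ? old] new; split=> // x /created_rcons1 [/old // | [/esym /new]]. Qed.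

Lemma quorum_nullify_cat S out m u :
  quorum_nullify S out u -> quorum_nullify (S ++ m) (rcons out m) u.
Proof.
move=> [bn [bn_sent bn_view [Q [cardQ inQ]]]]; exists bn; split => //.
  by rewrite flatten_rcons mem_cat; case: bn_sent => ->; auto.
exists Q; split => // q /inQ [|[y [? ? ?]]]; first by left.
by right; exists y; rewrite mem_cat; split => //; apply/orP; left.
Qed.

Lemma slot_inv_init :
  slot_inv (W slot_input (lv st) (lent st) (lnullified st) (lnotarized st) [::]).
Proof.
constructor => //=.
- by rewrite cats0.
- by move=> x nx; split=> //; [exact: notarized_view | left].
- by move=> ? [].
- by move=> ? ? [].
- by move=> ? [].
- by move=> ? [].
Qed.

Lemma slot_inv_relay w m : slot_inv w ->
  (forall a, a \in m -> a \in slot_input \/ exists b, a = ABlock n b) -> slot_inv (wsend w m).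
Proof.
case: w => S v e nul nt out [/= eS le_v flags notar votes votes_uniq nulls own] relay_m.
have relayed a : created a (rcons out m) -> (forall b, a <> ABlock n b) -> created a out.
  by case/created_rcons => [// | [/relay_m [-> // | [b ->]] _ /(_ b)]].
have FV x : created (AVote i x) (rcons out m) -> created (AVote i x) out.
  by move/relayed; apply.
have FN u : created (ANull Tx i u) (rcons out m) -> created (ANull Tx i u) out.
  by move/relayed; apply.
constructor => //=.
- by rewrite eS flatten_rcons catA.
- move=> x /notar [? [?|?]]; split => //; first by left.
  by right; rewrite flatten_rcons mem_cat; apply/orP; left.
- by move=> x /FV /votes.
- by move=> x y /FV Hx /FV Hy; apply: votes_uniq.
- move=> u /FN /nulls [? ? [[? ? new]|C8]]; split => //.
    by left; split => // x /FV /new.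
  by right; exact: quorum_nullify_cat.
- move=> a /created_rcons [/own // | [/relay_m [Ha | [b ->]] nHa]].
    by rewrite Ha in nHa.
  by apply: Or33; exists b.
Qed.

Lemma slot_inv_relay_all (ms : seq (msg n Tx)) w : slot_inv w ->
  (forall m a, m \in ms -> a \in m -> a \in slot_input) -> slot_inv (foldl (@wsend n Tx) w ms).
Proof.
elim: ms w => [|m ms IH] w //= Pw Hms.
apply: IH => [|m' a relay_m' Ha]; last by apply: (Hms m') => //; rewrite inE relay_m' orbT.
by apply: slot_inv_relay => // a Ha; left; apply: (Hms m) => //; exact: mem_head.
Qed.

Lemma slot_inv_advance t w : slot_inv w -> slot_inv (W (wS w) (wv w).+1 t false None (wout w)).
Proof.
case: w => S v e nul nt out [/= eS le_v flags notar votes votes_uniq nulls own].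
constructor => //=.
- exact: leqW.
- by move=> Ev; move: le_v; rewrite -Ev ltnn.
- move=> x /votes [a1 a2 a3]; split => //; left.
  by case: a2 => [/ltnW | [-> _]].
- move=> u /nulls [/andP[a1 a2] _ a4]; split => //.
  + by rewrite a1 leqW.
  + by move=> Huv; move: a2; rewrite Huv ltnn.
Qed.

Lemma slot_inv_vote x w : slot_inv w -> wnt w = None -> wnul w = false -> bview x = wv w ->
  slot_inv (wsend (W (wS w) (wv w) (went w) false (Some x) (wout w)) [:: AVote i x]).
Proof.
case: w => S v e nul nt out [/= eS le_v flags notar votes votes_uniq nulls own] /= ntN nulF xv.
subst nt nul.
have fresh_view : v = lv st -> lnullified st = false /\ lnotarized st = None.
  move=> /flags [c1 c2]; split; first by apply/negbTE/negP => /c1.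
  by case E: lnotarized => [y|] //; move/c2: E.
have older y : created (AVote i y) out -> bview y < v.
  by case/votes => _ [// | [_ //]].
constructor => /=.
- by rewrite eS flatten_rcons catA.
- exact: le_v.
- by move=> /fresh_view [-> ->].
- move=> y [<-]; split => //.
  by right; rewrite flatten_rcons mem_cat mem_head orbT.
- move=> y /created_rcons1 [Fy | [/AVote_inj [_ ->] _]].
    by have [? _ ?] := votes y Fy; split => //; left; apply: older.
  by split => //; [rewrite xv | right | rewrite xv => /fresh_view [-> ->]].
- move=> y z /created_rcons1 [Fy | [/AVote_inj [_ ->] _]]
              /created_rcons1 [Fz | [/AVote_inj [_ ->] _]] //.
  + exact: votes_uniq.
  + by move: (older _ Fy); rewrite xv => /[swap] ->; rewrite ltnn.
  + by move: (older _ Fz); rewrite xv => /[swap] ->; rewrite ltnn.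
- move=> u /created_rcons1 [Fu | [//]].
  have [/andP[a1 a2] a3 a4] := nulls u Fu.
  have ltuv : u < v by rewrite ltn_neqAle a2 andbT; apply/eqP => /a3.
  split => //; first by rewrite a1 ltnW.
  case: a4 => [C5 | C8]; last by right; exact: quorum_nullify_cat.
  left; apply: timeout_nullify_rcons => // y /AVote_inj [_ <-].
  by rewrite xv => Evu; move: ltuv; rewrite Evu ltnn.
- by move=> a /created_rcons1 [/own // | [-> _]]; apply: Or31; exists x.
Qed.

Lemma slot_inv_nullify w : slot_inv w -> wnul w = false ->
  timeout_nullify (wout w) (wv w) \/ quorum_nullify (wS w) (wout w) (wv w) ->
  slot_inv (wsend (W (wS w) (wv w) (went w) true (wnt w) (wout w)) [:: ANull Tx i (wv w)]).
Proof.
case: w => S v e nul nt out [/= eS le_v flags notar votes votes_uniq nulls own] /= nulF reason.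
subst nul.
have FV y : created (AVote i y) (rcons out [:: ANull Tx i v]) -> created (AVote i y) out.
  by case/created_rcons1 => [// | []].
have reason_rcons u : timeout_nullify out u \/ quorum_nullify S out u ->
    timeout_nullify (rcons out [:: ANull Tx i v]) u \/
    quorum_nullify (S ++ [:: ANull Tx i v]) (rcons out [:: ANull Tx i v]) u.
  case=> [C5 | C8]; last by right; exact: quorum_nullify_cat.
  by left; apply: timeout_nullify_rcons.
constructor => /=.
- by rewrite eS flatten_rcons catA.
- exact: le_v.
- by move=> /flags [_ c2].
- move=> x /notar [? [? | a3]]; split => //; [by left | right].
  by rewrite flatten_rcons mem_cat a3.
- by move=> y /FV /votes.
- by move=> y z /FV Fy /FV Fz; apply: votes_uniq.
- move=> u /created_rcons1 [/nulls [? _ ?] | [/ANull_inj [_ ->] _]].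
    by split => //; exact: reason_rcons.
  by split => //; [rewrite le_v leqnn | exact: reason_rcons].
- by move=> a /created_rcons1 [/own // | [-> _]]; apply: Or32; exists v.
Qed.

Lemma step12_slot_inv Sprev w : slot_inv w -> wS w = slot_input -> slot_inv (step12 f Sprev w).
Proof.
move=> Pw HS; apply: slot_inv_relay_all => // m a Hm Ha.
by rewrite -HS; exact: (mem_new_messages Hm Ha).
Qed.

Lemma step3_slot_inv Tr w : slot_inv w -> slot_inv (step3 f H i Tr w).
Proof.
rewrite /step3; case: ifP => // _ Pw; apply: slot_inv_relay => // a.
by rewrite inE => /eqP ->; right; eexists.
Qed.

Lemma step4_slot_inv w : slot_inv w -> slot_inv (step4 f H i w).
Proof.
rewrite /step4; case Evp: valid_proposal => [x|] //; case: ifP => // /andP[ntN /negbTE nulF] Pw.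
rewrite nulF; apply: slot_inv_vote => //; first by case: (wnt w) ntN.
exact: valid_proposal_view Evp.
Qed.

Lemma step3_wv Tr w : wv (step3 f H i Tr w) = wv w.
Proof. by rewrite /step3; case: ifP. Qed.

Lemma step4_wv w : wv (step4 f H i w) = wv w.
Proof. by rewrite /step4; case: valid_proposal => // x; case: ifP. Qed.

Lemma step5_slot_inv t w : slot_inv w -> wv w = lv st -> slot_inv (step5 Delta i t w).
Proof.
rewrite /step5; case: ifP => // /andP[/andP[_ /negbTE nulF] ntN] Pw Ev.
have {}ntN : wnt w = None by case: (wnt w) ntN.
apply: slot_inv_nullify => //; left; split => //.
  by case E: lnotarized => [y|] //; have := (slot_flags_kept Pw Ev).2 y E; rewrite ntN.
move=> x /(slot_vote Pw) [_ [lt_xv | [_ ntS]] _]; last by rewrite ntN in ntS.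
by move=> Exv; move: lt_xv; rewrite Exv ltnn.
Qed.

Lemma step6_slot_inv t w : slot_inv w -> slot_inv (step6 f t w).
Proof. by rewrite /step6; case: ifP => // _; exact: slot_inv_advance. Qed.

Lemma step7_slot_inv t b7 w : slot_inv w -> slot_inv (step7 f i t b7 w).
Proof.
rewrite /step7; case Ec: [seq _ <- _ | _] => [|b0 c] // Pw.
set b := if b7 \in _ then _ else _.
have bv : bview b = wv w.
  have : b \in [seq b1 <- blocks (wS w) | mnotb f (wS w) b1 && (bview b1 == wv w)].
    by rewrite /b Ec; case: ifP => // _; exact: mem_head.
  by rewrite mem_filter => /andP[/andP[_ /eqP]].
case: ifP => [/andP[ntN /negbTE nulF] | _]; last exact: slot_inv_advance.
have {}ntN : wnt w = None by case: (wnt w) ntN.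
exact: slot_inv_advance (slot_inv_vote Pw ntN nulF bv).
Qed.

Lemma step8_slot_inv w : slot_inv w -> slot_inv (step8 f i w).
Proof.
rewrite /step8; case Ent: (wnt w) => [bn|] //; case: ifP => // /andP[/negbTE nulF quorum] Pw.
have [bnv bn_voted] := slot_notarized Pw Ent.
rewrite -Ent; apply: slot_inv_nullify => //; right; exists bn; split => //.
exists [set q | (ANull Tx q (wv w) \in wS w) || has (other_vote q (wv w) bn) (wS w)].
split; first by rewrite -card_filter_enum.
move=> q; rewrite inE => /orP[Nq | /hasP[a Ha ov]].
  left; case Ein: (ANull Tx q (wv w) \in slot_input) => //.
  have Fq : created (ANull Tx q (wv w)) (wout w).
    by split; [move: Nq; rewrite (slot_S Pw) mem_cat Ein | rewrite Ein].
  have [[x //] | [u /ANull_inj [Eq _]] | [b //]] := slot_created Pw Fq.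
  by subst q; have [_ /(_ erefl) ] := slot_nullify Pw Fq; rewrite nulF.
right; case: a Ha ov => [[B | [q' y]] | [q' u]] //= Ha /andP[/andP[/eqP Eq /eqP Ey] /eqP Ny].
by exists y; rewrite -Eq.
Qed.

Lemma protocol_step_slot_inv t Tr b7 : exists w, slot_inv w /\
  protocol_step f Delta H i t Tr b7 st R =
    (LState (wS w) (wv w) (went w) (wnul w) (wnt w), wout w).
Proof.
eexists; split; last reflexivity.
apply: step8_slot_inv; apply: step7_slot_inv; apply: step6_slot_inv; apply: step5_slot_inv.
  apply: step4_slot_inv; apply: step3_slot_inv; apply: step12_slot_inv => //.
  exact: slot_inv_init.
by rewrite step4_wv step3_wv foldl_wsend_wv.
Qed.

End Timeslot.

Section Execution.

Variables (n f Delta : nat) (Tx : countType) (H : block Tx -> nat) (E : execution n Tx).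
Hypothesis HE : is_execution f Delta H E.

Notation atomT := (atom n Tx).

Definition sent_at (a : atomT) t := exists q j m, m \in sent E q t j /\ a \in m.

(* [p]'s copy to itself stands for its broadcast: a correct processor sends
   the same messages to everybody. *)
Definition sent_before (p : Proc n) (a : atomT) T :=
  exists2 t, t < T & a \in flatten (sent E p t p).

Lemma sent_before_mono p a T T' : sent_before p a T -> T <= T' -> sent_before p a T'.
Proof. by move=> [t lt_t Ha] le_T; exists t => //; exact: leq_trans le_T. Qed.

Lemma correct_step p t : p \notin byz E ->
  let ps := protocol_step f Delta H p t (trch E p t) (b7ch E p t) (prev_state E p t) (recv E p t) in
  lst E p t = ps.1 /\ forall j, sent E p t j = ps.2.
Proof. by case: HE => _ /(_ p t) step /step [_ ? ?]. Qed.

Lemma own_sent_at p a t : a \in flatten (sent E p t p) -> sent_at a t.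
Proof. by move/flattenP => [m Hm Ha]; exists p, p, m. Qed.

Lemma recv_sent_earlier j t a : a \in recv E j t -> exists2 t', t' < t & sent_at a t'.
Proof.
rewrite /recv => /flattenP [m /flattenP [ms /allpairsP [[q t'] [_ /= Ht ->]] Hm] Ha].
exists t'; first by rewrite mem_iota in Ht.
by exists q, j, m; split => //; move: Hm; rewrite mem_filter => /andP[].
Qed.

Lemma unforgeable p a t : p \notin byz E -> sent_at a t -> atom_signer a = Some p ->
  sent_before p a t.+1.
Proof.
move=> p_correct [q [j [m [Hm Ha]]]] signed.
have [[_ _ _ no_forgery _] _] := HE.
have [t' [j' [m' [le_t' Hm' Ha']]]] := no_forgery _ _ _ _ _ _ Hm Ha signed p_correct.
exists t' => //; apply/flattenP; exists m' => //.
by have [_ sent_p] := correct_step t' p_correct; rewrite sent_p -(sent_p j').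
Qed.

Definition justified_nullify p u x := exists t0, [/\ ANull Tx p u \in flatten (sent E p t0 p),
  forall t, t < t0 -> ANull Tx p u \notin flatten (sent E p t p) &
  exists Q : {set Proc n}, 2 * f + 1 <= #|Q| /\ forall q, q \in Q ->
    (exists2 t1, t1 < t0 & sent_at (ANull Tx q u) t1) \/
    (exists y, [/\ sends_vote E q y, bview y = u & y <> x])].

Record state_inv p (st : lstate n Tx) T : Prop := {
  state_view_pos : 0 < lv st;
  state_S_sent : forall a, a \in lS st ->
    a = ABlock n (bgen Tx) \/ exists2 t, t < T & sent_at a t;
  state_S_own : forall a, sent_before p a T -> a \in lS st;
  state_vote_view : forall x, sent_before p (AVote p x) T ->
    bview x <= lv st /\ (bview x = lv st -> lnotarized st = Some x);
  state_notarized : forall x, lnotarized st = Some x ->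
    bview x = lv st /\ sent_before p (AVote p x) T;
  state_vote_unique : forall x y, sent_before p (AVote p x) T ->
    sent_before p (AVote p y) T -> bview x = bview y -> x = y;
  state_nullify_view : forall u, sent_before p (ANull Tx p u) T ->
    0 < u <= lv st /\ (u = lv st -> lnullified st);
  state_nullify_justified : forall x, sent_before p (AVote p x) T ->
    sent_before p (ANull Tx p (bview x)) T -> justified_nullify p (bview x) x
}.

Lemma state_inv_init p : state_inv p (prev_state E p 0) 0.
Proof.
constructor => //= [a | x [] | x [] | x y [] | u [] | x []] //.
by rewrite inE => /eqP ->; left.
Qed.

Section NextState.

Variables (p : Proc n) (t : nat) (w : wstate n Tx).
Let st := prev_state E p t.
Let R := recv E p t.
Hypotheses (p_correct : p \notin byz E) (Jp : state_inv p st t) (Pw : slot_inv f p st R w).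
Hypothesis sent_w : forall j, sent E p t j = wout w.

Lemma input_sent_earlier a : a \in slot_input st R ->
  a = ABlock n (bgen Tx) \/ exists2 t', t' < t & sent_at a t'.
Proof. by rewrite mem_cat => /orP[/(state_S_sent Jp) // | /recv_sent_earlier]; right. Qed.

Lemma wS_sent_earlier a : a \in wS w ->
  a = ABlock n (bgen Tx) \/ exists2 t', t' < t.+1 & sent_at a t'.
Proof.
rewrite (slot_S Pw) mem_cat => /orP[/input_sent_earlier [-> | [t' lt_t' ?]] | out_a].
- by left.
- by right; exists t' => //; exact: ltnW.
- by right; exists t => //; apply: (@own_sent_at p); rewrite sent_w.
Qed.

Lemma old_not_created a : sent_before p a t -> ~ created st R a (wout w).
Proof. by move=> /(state_S_own Jp) Ha [_]; rewrite mem_cat Ha. Qed.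

Lemma sent_before_next a : atom_signer a = Some p -> sent_before p a t.+1 ->
  sent_before p a t \/ created st R a (wout w).
Proof.
move=> signed [t' +]; rewrite ltnS leq_eqVlt => /orP[/eqP -> | lt_t' Ha]; last by left; exists t'.
rewrite sent_w => Ha; case Ein: (a \in slot_input st R); last by right; split => //; rewrite Ein.
left; have [Ea | [t'' lt_t'' Hsa]] := input_sent_earlier Ein; first by rewrite Ea in signed.
exact: sent_before_mono (unforgeable p_correct Hsa signed) _.
Qed.

Lemma vote_before_next x : sent_before p (AVote p x) t.+1 ->
  sent_before p (AVote p x) t \/ created st R (AVote p x) (wout w).
Proof. exact: sent_before_next. Qed.

Lemma nullify_before_next u : sent_before p (ANull Tx p u) t.+1 ->
  sent_before p (ANull Tx p u) t \/ created st R (ANull Tx p u) (wout w).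
Proof. exact: sent_before_next. Qed.

Lemma vote_unique_next x y : sent_before p (AVote p x) t.+1 -> sent_before p (AVote p y) t.+1 ->
  bview x = bview y -> x = y.
Proof.
have old_new x' y' : sent_before p (AVote p x') t -> created st R (AVote p y') (wout w) ->
    bview x' = bview y' -> x' = y'.
  move=> Ox Fy Exy; have [le_x cur_x] := state_vote_view Jp Ox.
  have [le_y _ fresh_y] := slot_vote Pw Fy.
  have Ev : bview x' = lv st by apply/eqP; rewrite eqn_leq le_x Exy le_y.
  by move: (cur_x Ev); rewrite (fresh_y _).1 // -Exy.
move=> /vote_before_next [Ox | Fx] /vote_before_next [Oy | Fy] Exy.
- exact: (state_vote_unique Jp).
- exact: old_new.
- by apply/esym; apply: old_new.
- exact: (slot_vote_unique Pw).
Qed.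

Lemma justified_next x : sent_before p (AVote p x) t.+1 ->
  sent_before p (ANull Tx p (bview x)) t.+1 -> justified_nullify p (bview x) x.
Proof.
move=> Ov /nullify_before_next [On | Fn].
  have [Ov' | Fv] := vote_before_next Ov; first exact: (state_nullify_justified Jp).
  have [/andP[_ le_n] cur_n] := state_nullify_view Jp On.
  have [le_v _ fresh_v] := slot_vote Pw Fv.
  have Ev : bview x = lv st by apply/eqP; rewrite eqn_leq le_n le_v.
  by move: (cur_n Ev); rewrite (fresh_v Ev).2.
have [_ _ [[Ev ntN no_vote] | [bn [bn_voted bn_view [Q [cardQ inQ]]]]]] := slot_nullify Pw Fn.
  have [Ov' | Fv] := vote_before_next Ov; last by case: (no_vote x Fv).
  by have [_ cur] := state_vote_view Jp Ov'; move: (cur Ev); rewrite ntN.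
have bn_before : sent_before p (AVote p bn) t.+1.
  case: bn_voted => [/(state_notarized Jp) [_ Ob] | bn_out]; first exact: sent_before_mono Ob _.
  by exists t; rewrite ?sent_w.
have Ebn : bn = x by apply: vote_unique_next.
exists t; split.
- by rewrite sent_w; case: Fn.
- by move=> t' lt_t'; apply/negP => Ha; apply: (old_not_created _ Fn); exists t'.
- exists Q; split => // q /inQ [Nq | [y [Vy yv ne_y]]].
    by left; case: (input_sent_earlier Nq) => [// | [t1 ? ?]]; exists t1.
  right; exists y; split => //; last by rewrite -Ebn.
  by case: (wS_sent_earlier Vy) => [// | [t1 _ [q' [j [m ?]]]]]; exists q', t1, j, m.
Qed.

Lemma state_inv_next : state_inv p (LState (wS w) (wv w) (went w) (wnul w) (wnt w)) t.+1.
Proof.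
have le_v := slot_view_ge Pw.
constructor => /=.
- exact: leq_trans (state_view_pos Jp) le_v.
- exact: wS_sent_earlier.
- move=> a [t' +]; rewrite (slot_S Pw) !mem_cat ltnS leq_eqVlt => /orP[/eqP -> | lt_t' Ha].
    by rewrite sent_w => ->; rewrite orbT.
  by rewrite (state_S_own Jp) //; exists t'.
- move=> x /vote_before_next [Ox | Fx].
    have [le_x cur_x] := state_vote_view Jp Ox; split; first exact: leq_trans le_x le_v.
    move=> Exw; have Ev : wv w = lv st by apply/eqP; rewrite eqn_leq le_v -Exw le_x.
    by apply: (slot_flags_kept Pw Ev).2; apply: cur_x; rewrite -Ev.
  have [_ [lt_x | [-> ->]] _] // := slot_vote Pw Fx.
  by split; [exact: ltnW | move=> Exw; move: lt_x; rewrite Exw ltnn].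
- move=> x /(slot_notarized Pw) [xv [/(state_notarized Jp) [_ Ox] | x_out]]; split => //.
    exact: sent_before_mono Ox _.
  by exists t; rewrite ?sent_w.
- exact: vote_unique_next.
- move=> u /nullify_before_next [Ou | Fu].
    have [/andP[u_pos le_u] cur_u] := state_nullify_view Jp Ou.
    split; first by rewrite u_pos (leq_trans le_u le_v).
    move=> Euw; have Ev : wv w = lv st by apply/eqP; rewrite eqn_leq le_v -Euw le_u.
    by apply: (slot_flags_kept Pw Ev).1; apply: cur_u; rewrite -Ev.
  have [/andP[le_u u_le] cur_u _] := slot_nullify Pw Fu; split => //.
  by rewrite u_le (leq_trans (state_view_pos Jp) le_u).
- exact: justified_next.
Qed.

End NextState.

Lemma state_inv_step p t : p \notin byz E ->
  state_inv p (prev_state E p t) t -> state_inv p (lst E p t) t.+1.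
Proof.
move=> p_correct Jp.
have notarized_view x : lnotarized (prev_state E p t) = Some x -> bview x = lv (prev_state E p t).
  by case/(state_notarized Jp).
have [w [Pw Ew]] := protocol_step_slot_inv f Delta H p (recv E p t) notarized_view t
  (trch E p t) (b7ch E p t).
have [-> sent_p] := correct_step t p_correct.
by rewrite Ew; apply: state_inv_next => // j; rewrite sent_p Ew.
Qed.

Lemma state_invariant p t : p \notin byz E -> state_inv p (prev_state E p t) t.
Proof.
by move=> p_correct; elim: t => [|t IH]; [exact: state_inv_init | exact: state_inv_step].
Qed.

Lemma correct_vote_sent_before p x : p \notin byz E -> sends_vote E p x ->
  exists T, sent_before p (AVote p x) T.
Proof.
move=> p_correct [q [t [j [m [Hm Ha]]]]]; exists t.+1.
by apply: unforgeable => //; exists q, j, m.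
Qed.

Lemma correct_nullify_sent_before p u : p \notin byz E -> sends_nullify E p u ->
  exists T, sent_before p (ANull Tx p u) T.
Proof.
move=> p_correct [q [t [j [m [Hm Ha]]]]]; exists t.+1.
by apply: unforgeable => //; exists q, j, m.
Qed.

Lemma correct_nullify_view_pos p u : p \notin byz E -> sends_nullify E p u -> 0 < u.
Proof.
move=> p_correct /(correct_nullify_sent_before p_correct) [T Nu].
by have [/andP[]] := state_nullify_view (state_invariant T p_correct) Nu.
Qed.

Lemma correct_vote_unique p x y : p \notin byz E -> sends_vote E p x -> sends_vote E p y ->
  bview x = bview y -> x = y.
Proof.
move=> p_correct /(correct_vote_sent_before p_correct) [T1 Vx].
move=> /(correct_vote_sent_before p_correct) [T2 Vy].
apply: (state_vote_unique (state_invariant (maxn T1 T2) p_correct)).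
- exact: sent_before_mono Vx (leq_maxl _ _).
- exact: sent_before_mono Vy (leq_maxr _ _).
Qed.

Lemma voted_nullify_justified p x t0 : p \notin byz E -> sends_vote E p x ->
  ANull Tx p (bview x) \in flatten (sent E p t0 p) ->
  exists Q : {set Proc n}, 2 * f + 1 <= #|Q| /\ forall q, q \in Q ->
    (exists2 t1, t1 < t0 & sent_at (ANull Tx q (bview x)) t1) \/
    (exists y, [/\ sends_vote E q y, bview y = bview x & y <> x]).
Proof.
move=> p_correct /(correct_vote_sent_before p_correct) [T Vx] Nx.
have Nx' : sent_before p (ANull Tx p (bview x)) t0.+1 by exists t0.
have J := state_invariant (maxn T t0.+1) p_correct.
have [t1 [_ first [Q [cardQ inQ]]]] := state_nullify_justified J
  (sent_before_mono Vx (leq_maxl _ _)) (sent_before_mono Nx' (leq_maxr _ _)).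
have le_t1 : t1 <= t0 by rewrite leqNgt; apply/negP => /first; rewrite Nx.
exists Q; split => // q /inQ [[t2 lt_t2 ?] | ?]; last by right.
by left; exists t2 => //; exact: leq_trans lt_t2 le_t1.
Qed.

Lemma correct_in_quorum (P Q : {set Proc n}) : n - f <= #|P| -> 2 * f + 1 <= #|Q| ->
  exists q, [/\ q \in Q, q \notin byz E & q \in P].
Proof.
move=> cardP cardQ; apply: quorum_intersection.
have [[byz_le _ _ _ _] _] := HE.
by have := cardsC P; rewrite card_ord; lia.
Qed.

Lemma voters_never_nullify b (P : {set Proc n}) : n - f <= #|P| ->
  (forall p, p \in P -> sends_vote E p b) ->
  forall p, p \in P -> p \notin byz E -> ~ sends_nullify E p (bview b).
Proof.
move=> cardP voted.
suff never t0 p : p \in P -> p \notin byz E ->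
    ANull Tx p (bview b) \notin flatten (sent E p t0 p).
  move=> p pP p_correct /(correct_nullify_sent_before p_correct) [T [t0 _]].
  by apply/negP; apply: never.
elim/ltn_ind: t0 p => t0 IH p pP p_correct; apply/negP => Nb.
have [Q [cardQ inQ]] := voted_nullify_justified p_correct (voted p pP) Nb.
have [q [qQ q_correct qP]] := correct_in_quorum cardP cardQ.
case: (inQ q qQ) => [[t1 lt_t1 N1] | [y [Vy yv ne_y]]].
  have [t2 le_t2 N2] := unforgeable q_correct N1 erefl.
  by move/negP: (IH t2 (leq_trans le_t2 lt_t1) q qP q_correct).
by apply: ne_y; apply: correct_vote_unique q_correct Vy (voted q qP) yv.
Qed.

End Execution.

Theorem lemma3 (n f Delta : nat) (Tx : countType) (H : block Tx -> nat)
    (E : execution n Tx) (b : block Tx) :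
  5 * f + 1 <= n ->
  injective H ->
  is_execution f Delta H E ->
  receives_L_notarization f E b ->
  ~ receives_nullification f E (bview b).
Proof.
move=> _ _ HE [-> | [P [cardP voted]]] [Q [cardQ nullified]].
  have cardT : n - f <= #|[set: Proc n]| by rewrite cardsT card_ord leq_subr.
  have [q [qQ q_correct _]] := correct_in_quorum HE cardT cardQ.
  by have := correct_nullify_view_pos HE q_correct (nullified q qQ).
have [q [qQ q_correct qP]] := correct_in_quorum HE cardP cardQ.
exact: (voters_never_nullify HE cardP voted qP q_correct (nullified q qQ)).
Qed.
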